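(* Let $X$ be a real Hilbert space with inner product $\langle\cdot,\cdot\rangle$ and norm $|x|=\sqrt{\langle x,x\rangle}$, let $G:X\to[0,\infty)$ and $Z=\{z\in X:G(z)\le1\}$. Assume that the gradient $\nabla G(x)$ exists for every $x\in X$ and that there are positive constants $\lambda,c$ and a continuous increasing function $\mu:[0,\infty)\to[0,\infty)$ with $\mu(0)=0$, $\lim_{s\to\infty}\mu(s)=\infty$, such that (i) $G(x)=1\Rightarrow|\nabla G(x)|\ge c$ for all $x\in X$; (ii) $|\nabla G(x)-\nabla G(y)|\le\mu(|x-y|)$ for all $x,y\in Z$; (iii) $\langle\nabla G(x)-\nabla G(z),x-z\rangle\ge-\lambda|x-z|^2$ for all $x\in\partial Z$, $z\in Z$. Let $r=c/\lambda$. Then for all $x\in\partial Z$ and $z\in Z$, $$\langle\nabla G(x),x-z\rangle+\frac{|\nabla G(x)|}{2r}|x-z|^2\ge0.$$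
   Context: The gradient $\nabla G(x)\in X$ is defined by $\langle\nabla G(x),y\rangle=\lim_{t\to0}\frac1t(G(x+ty)-G(x))$ for all $y\in X$. $\partial Z$ denotes the boundary of $Z$. *)

From HB Require Import structures.
From mathcomp Require Import all_boot all_order all_algebra.
From mathcomp Require Import all_classical all_reals all_analysis.
Set Implicit Arguments. Unset Strict Implicit. Unset Printing Implicit Defensive.
Import Order.TTheory GRing.Theory Num.Theory.
Import numFieldNormedType.Exports.
Local Open Scope classical_set_scope.
Local Open Scope ring_scope.

(* A real Hilbert space is represented as a complete normed space X over R
   together with a real inner product [ip] whose induced norm is the norm
   of X, i.e. |x| = sqrt <x,x>. *)
Definition is_hilbert_inner (R : realType) (X : completeNormedModType R)
  (ip : X -> X -> R) : Prop :=
  [/\ (forall x y, ip x y = ip y x),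
      (forall a x y z, ip (a *: x + y) z = a * ip x z + ip y z),
      (forall x, 0 <= ip x x),
      (forall x, ip x x = 0 -> x = 0) &
      (forall x, `|x| = Num.sqrt (ip x x))].

Definition is_gradient (R : realType) (X : completeNormedModType R)
  (ip : X -> X -> R) (G : X -> R) (x g : X) : Prop :=
  forall y : X, (fun t : R => (G (x + t *: y) - G x) / t) @ 0^' --> ip g y.

Definition boundary (T : topologicalType) (A : set T) : set T :=
  closure A `\` interior A.

From HB Require Import structures.
From mathcomp Require Import all_boot all_order all_algebra.
From mathcomp Require Import all_classical all_reals all_analysis.
From mathcomp Require Import ring lra.
Import Order.TTheory GRing.Theory Num.Theory.
Import numFieldNormedType.Exports.
Local Open Scope classical_set_scope.
Local Open Scope ring_scope.

Set Implicit Arguments. Unset Strict Implicit. Unset Printing Implicit Defensive.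

(* The inequality says that the open ball of radius r centred at
   x + r grad G(x) / |grad G(x)| misses Z, and it suffices to show this for every
   radius rho < r, i.e. lambda rho < c.  Integrating (iii) along segments gives
   <grad G(x), z - x> <= lambda |z - x|^2 for z in Z, so the centre p of such a ball
   lies outside Z; as Z is closed, p is at a positive distance Ds < rho from Z.  At a
   point w of {G = 1} almost realising this distance, the unit vector from w to p is
   almost the unit normal grad G(w) / |grad G(w)|: otherwise a short step from w along
   their difference stays in Z, by the uniform continuity (ii) of grad G, and gets
   closer to p.  Inserting this alignment into (iii) at x and w contradicts
   lambda rho < c.  As G is only Gateaux differentiable, every "stays in Z" argument
   is a continuous induction along a segment. *)

Lemma min_gt0 (R : realDomainType) (x y : R) : 0 < x -> 0 < y ->
  [/\ 0 < Num.min x y, Num.min x y <= x & Num.min x y <= y].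
Proof. by move=> x0 y0; rewrite lt_min x0 y0 !ge_min !lexx orbT. Qed.

Section RealDerivative.
Variable R : realType.

Definition derivative_at (f : R -> R) (t L : R) : Prop :=
  (fun h => (f (t + h) - f t) / h) @ 0^' --> L.

Lemma derivative_atP f t L : derivative_at f t L ->
  forall eps, 0 < eps -> exists2 e : R, 0 < e & forall h, h != 0 -> `|h| < e ->
    `|(f (t + h) - f t) / h - L| < eps.
Proof.
move=> /cvgrPdist_lt D eps /D /nbhs_ballP[e /= e0 De]; exists e => // h h0 he.
by rewrite distrC; apply: De => //; rewrite /ball /= sub0r normrN.
Qed.

Lemma derivative_atN f t L :
  derivative_at f t L -> derivative_at (fun s => - f s) t (- L).
Proof.
move=> /cvgN; apply: cvg_trans; apply: near_eq_cvg; near=> h.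
by rewrite /= -mulNr opprD.
Unshelve. all: by end_near. Qed.

Lemma derivative_atB_linear f K t L :
  derivative_at f t L -> derivative_at (fun s => f s - s * K) t (L - K).
Proof.
move=> /cvgB /(_ (cvg_cst K)); apply: cvg_trans; apply: near_eq_cvg.
near=> h; have h0 : h != 0 by near: h; exact: nbhs_dnbhs_neq.
rewrite !fctE; field.
Unshelve. all: by end_near. Qed.

Lemma derivative_at_gt0 f t L : derivative_at f t L -> 0 < L ->
  exists2 e : R, 0 < e & forall h, 0 < h -> h < e -> f t < f (t + h).
Proof.
move=> D L0; have [e e0 De] := derivative_atP D L0; exists e => // h h0 he.
have := De h (lt0r_neq0 h0); rewrite gtr0_norm // => /(_ he).
rewrite ltr_norml => /andP[q0 _]; have {}q0 : 0 < (f (t + h) - f t) / h by lra.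
by have := mulr_gt0 q0 h0; rewrite divfK ?lt0r_neq0 // subr_gt0.
Qed.

Lemma derivative_at_lt0 f t L : derivative_at f t L -> L < 0 ->
  exists2 e : R, 0 < e & forall h, 0 < h -> h < e -> f (t + h) < f t.
Proof.
move=> /derivative_atN D L0; have [|e e0 De] := derivative_at_gt0 D; first lra.
by exists e => // h h0 he; rewrite -ltrN2; apply: De.
Qed.

Lemma derivative_at_continuous f t L : derivative_at f t L -> {for t, continuous f}.
Proof.
move=> D; have [e e0 De] := derivative_atP D ltr01.
have K0 : 0 < `|L| + 1 by rewrite ltr_wpDl.
apply/cvgrPdist_lt => eps eps0; apply/nbhs_ballP.
exists (Num.min e (eps / (`|L| + 1))) => [|y]; first by rewrite /= lt_min e0 divr_gt0.
rewrite /ball_ /= lt_min distrC => /andP[ye yeps].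
have [->|yt] := eqVneq y t; first by rewrite subrr normr0.
have := De (y - t); rewrite subr_eq0 yt (addrC t) subrK => /(_ isT ye) Dy.
have : `|(f y - f t) / (y - t)| < `|L| + 1.
  by have := ler_normD ((f y - f t) / (y - t) - L) L; rewrite subrK; lra.
rewrite normrM normfV ltr_pdivrMr ?normr_gt0 ?subr_eq0 // distrC => lt_fy.
by apply: (lt_trans lt_fy); rewrite mulrC -ltr_pdivlMr.
Qed.

Lemma le_forward_invariant (f f' : R -> R) (a b k : R) :
  (forall t, derivative_at f t (f' t)) ->
  (forall t, a <= t < b -> f t <= k -> f' t < 0) ->
  f a <= k -> forall t, a <= t <= b -> f t <= k.
Proof.
move=> D f'_lt0 fa t /andP[a_t t_b].
pose A := [set s | a <= s <= b /\ forall s', a <= s' <= s -> f s' <= k].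
have Aa : A a.
  split=> [|s' /andP[a_s' s'a]]; first by rewrite lexx (le_trans a_t t_b).
  by have -> : s' = a by apply/eqP; rewrite eq_le s'a.
have hsA : has_sup A by split; [exists a | exists b => y [/andP[]]].
pose s := sup A.
have a_s : a <= s by apply: sup_upper_bound.
have sb : s <= b by apply: ge_sup; [exists a | move=> y [/andP[]]].
have below s' : a <= s' -> s' < s -> f s' <= k.
  move=> a_s' s's; have [y [_ Ay] s'y] := sup_adherent (ltac:(lra) : 0 < s - s') hsA.
  by apply: Ay; rewrite a_s' /=; rewrite -/s in s'y; lra.
have fs : f s <= k.
  rewrite leNgt; apply/negP => ks.
  have [eq_as|a_s'] := eqVneq a s; first by rewrite eq_as in fa; lra.
  have /nbhs_ballP[d /= d0 Hd] : \forall y \near s, k < f y :=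
    @cvgr_gt _ _ _ (nbhs_filter s) _ (f s) (derivative_at_continuous (D s)) k ks.
  have [m0 md ma] := min_gt0 d0 (ltac:(by rewrite subr_gt0 lt_neqAle a_s' a_s) : 0 < s - a).
  set m := Num.min _ _ in m0 md ma.
  have := Hd (s - m / 2); rewrite /ball /= opprB addrC subrK gtr0_norm ?divr_gt0 //.
  by move=> /(_ ltac:(lra)); have := below (s - m / 2) ltac:(lra) ltac:(lra); lra.
have As : A s.
  split=> [|s' /andP[a_s' s's]]; first by rewrite a_s sb.
  by have [->|s'_neq] := eqVneq s' s; [|apply: below; rewrite // lt_neqAle s'_neq].
suff sb' : s = b by apply: As.2; rewrite a_t sb'.
apply/eqP; rewrite eq_le sb leNgt; apply/negP => s_lt_b.
have [e e0 De] := derivative_at_lt0 (D s) (f'_lt0 s ltac:(lra) fs).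
have [m0 me mb] := min_gt0 e0 (ltac:(by rewrite subr_gt0) : 0 < b - s).
set m := Num.min _ _ in m0 me mb.
suff /(sup_upper_bound hsA) : A (s + m / 2) by rewrite -/s; lra.
split=> [|s' /andP[a_s' s's]]; first by apply/andP; split; lra.
have [s's'|ss'] := leP s' s; first by apply: As.2; rewrite a_s'.
have := De (s' - s) ltac:(lra) ltac:(lra); rewrite addrC subrK; lra.
Qed.

End RealDerivative.

Lemma continuous_at0_lt (R : realType) (mu : R -> R) :
  {within `[0, +oo[, continuous mu} -> mu 0 = 0 ->
  forall eps, 0 < eps ->
  exists2 s0 : R, 0 < s0 & forall s, 0 <= s -> s <= s0 -> mu s < eps.
Proof.
move=> mu_cont mu0 eps eps0.
have A0 : `[0, +oo[%classic (0 : R) by rewrite /= in_itv /= lexx.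
have := (proj1 (subspace_continuousP _ _) mu_cont) 0 A0.
move=> /cvgrPdist_lt /(_ _ eps0) /nbhs_ballP[e /= e0 He].
exists (e / 2) => [|s s0 se]; first by rewrite divr_gt0.
have := He s; rewrite /ball /= sub0r normrN ger0_norm // in_itv /= s0.
rewrite /from_subspace mu0 sub0r normrN => /(_ ltac:(lra) isT) mu_lt.
exact: le_lt_trans (ler_norm _) mu_lt.
Qed.

Section NormedSpace.
Variables (R : realType) (V : normedModType R).

Lemma boundary_near_in (A : set V) x : boundary A x ->
  forall e, 0 < e -> exists2 y, A y & `|y - x| < e.
Proof.
move=> [x_cl _] e e0; have /x_cl[y [Ay xy]] : nbhs x (ball x e).
  by apply/nbhs_ballP; exists e.
by exists y; rewrite // distrC; move: xy; rewrite -ball_normE.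
Qed.

Lemma boundary_near_notin (A : set V) x : boundary A x ->
  forall e, 0 < e -> exists2 y, ~ A y & `|y - x| < e.
Proof.
move=> [_ x_int] e e0; apply: contrapT => no_y; apply: x_int.
apply/nbhs_ballP; exists e => // y; rewrite -ball_normE /= distrC => ye.
by apply: contrapT => Ay; apply: no_y; exists y.
Qed.

Definition normalize (a : V) : V := `|a|^-1 *: a.

Lemma norm_normalize a : a != 0 -> `|normalize a| = 1.
Proof.
move=> a0; rewrite normrZ normfV normr_id mulVf //.
by rewrite normr_eq0.
Qed.

Lemma normalizeK a : a != 0 -> `|a| *: normalize a = a.
Proof. by move=> a0; rewrite scalerA divff ?normr_eq0 // scale1r. Qed.

End NormedSpace.

Section InnerProduct.
Variables (R : realType) (X : completeNormedModType R) (ip : X -> X -> R).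
Hypothesis hip : is_hilbert_inner ip.

Lemma ipC x y : ip x y = ip y x.
Proof. by case: hip. Qed.

Lemma ipZDl a x y z : ip (a *: x + y) z = a * ip x z + ip y z.
Proof. by case: hip. Qed.

Lemma ipDl x y z : ip (x + y) z = ip x z + ip y z.
Proof. by have := ipZDl 1 x y z; rewrite scale1r mul1r. Qed.

Lemma ip0l z : ip 0 z = 0.
Proof. by have := ipDl 0 0 z; rewrite addr0; lra. Qed.

Lemma ipZl a x z : ip (a *: x) z = a * ip x z.
Proof. by rewrite -[a *: x]addr0 ipZDl ip0l addr0. Qed.

Lemma ipNl x z : ip (- x) z = - ip x z.
Proof. by rewrite -scaleN1r ipZl mulN1r. Qed.

Lemma ipBl x y z : ip (x - y) z = ip x z - ip y z.
Proof. by rewrite ipDl ipNl. Qed.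

Lemma ipDr x y z : ip z (x + y) = ip z x + ip z y.
Proof. by rewrite ipC ipDl !(ipC z). Qed.

Lemma ipZr a x z : ip z (a *: x) = a * ip z x.
Proof. by rewrite ipC ipZl ipC. Qed.

Lemma ipNr x z : ip z (- x) = - ip z x.
Proof. by rewrite ipC ipNl ipC. Qed.

Lemma ipBr x y z : ip z (x - y) = ip z x - ip z y.
Proof. by rewrite ipDr ipNr. Qed.

Lemma ipxx x : ip x x = `|x| ^+ 2.
Proof. by case: hip => _ _ ip_ge0 _ ->; rewrite sqr_sqrtr. Qed.

Lemma normD2 a b : `|a + b| ^+ 2 = `|a| ^+ 2 + 2 * ip a b + `|b| ^+ 2.
Proof. by rewrite -!ipxx ipDl !ipDr (ipC b a); ring. Qed.

Lemma normB2 a b : `|a - b| ^+ 2 = `|a| ^+ 2 - 2 * ip a b + `|b| ^+ 2.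
Proof. by rewrite normD2 ipNr normrN; ring. Qed.

Lemma ip_normalize a : ip a (normalize a) = `|a|.
Proof.
have [->|a0] := eqVneq a 0; first by rewrite normr0 /normalize scaler0 ip0l.
by rewrite ipZr ipxx expr2 mulKf ?normr_eq0.
Qed.

Lemma ip_normalizeB a b : a != 0 -> b != 0 ->
  ip a (normalize a - normalize b) = `|a| * `|normalize a - normalize b| ^+ 2 / 2.
Proof.
move=> a0 b0; rewrite normB2 !norm_normalize // -{1}(normalizeK a0) ipZl ipBr ipxx.
by rewrite norm_normalize // expr1n; field.
Qed.

Lemma cauchy_schwarz x y : `|ip x y| <= `|x| * `|y|.
Proof.
suff ip_le a b : ip a b <= `|a| * `|b|.
  by rewrite ler_norml ip_le andbT lerNl -ipNl -(normrN x) ip_le.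
have : `|a + b| ^+ 2 <= (`|a| + `|b|) ^+ 2.
  by rewrite lerXn2r ?nnegrE ?addr_ge0 ?ler_normD.
rewrite normD2; nra.
Qed.

Lemma ip_descent_perturbed (h h' r : X) (c s : R) :
  0 < c -> c <= `|h| -> `|h' - h| <= c / 4 -> 3 * `|r| < s ->
  ip h' (r - s *: normalize h) <= - (c / 4 * `|r - s *: normalize h|).
Proof.
move=> c0 ch hh' rs; have h0 : h != 0 by rewrite -normr_gt0; lra.
have n1 := norm_normalize h0.
have ip_r : ip h' r <= (`|h| + c / 4) * `|r|.
  have : `|h'| * `|r| <= (`|h| + c / 4) * `|r|.
    by apply: ler_wpM2r => //; have := ler_normD h (h' - h); rewrite addrC subrK; lra.
  by have := ler_norm (ip h' r); have := cauchy_schwarz h' r; lra.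
have ip_n : - (c / 4) <= ip (h' - h) (normalize h).
  have := cauchy_schwarz (h' - h) (normalize h); rewrite n1 mulr1 ler_norml.
  by case/andP; lra.
have s0 : 0 <= s by have := normr_ge0 r; lra.
have {}ip_n := ler_wpM2l s0 ip_n.
have nv : c / 4 * `|r - s *: normalize h| <= c / 4 * (`|r| + s).
  rewrite ler_pM2l ?divr_gt0 //; apply: le_trans (ler_normB _ _) _.
  by rewrite normrZ n1 mulr1 ger0_norm.
have ip_hn : ip h' (normalize h) = ip (h' - h) (normalize h) + `|h|.
  by rewrite ipBl ip_normalize subrK.
rewrite ipBr ipZr ip_hn; nra.
Qed.

End InnerProduct.

Section RealInequalities.
Variable R : realFieldType.

Lemma le_mul_of_forall_lt (r b K : R) : 0 < r -> 0 <= K ->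
  (forall rho, 0 < rho -> rho < r -> rho * b <= K) -> r * b <= K.
Proof.
move=> r0 K0 rhoK; rewrite leNgt; apply/negP => K_rb.
pose z := (K + r * b) / 2; have z0 : 0 < z by rewrite /z; lra.
have b_gt0 : 0 < b by rewrite -(pmulr_rgt0 _ r0); lra.
have := rhoK (z / b) (divr_gt0 z0 b_gt0); rewrite divfK ?gt_eqF // ltr_pdivrMr //.
by rewrite /z; lra.
Qed.

Lemma shortcut_sqr_lt (Ds delta m sg ep th : R) :
  0 < Ds -> Ds <= delta -> delta < Ds + ep -> ep <= Ds -> ep <= sg * th / 8 ->
  0 < sg -> sg <= Ds * th / 2 -> 0 < th -> th <= m ->
  sg ^+ 2 - sg * delta * m + delta ^+ 2 < Ds ^+ 2.
Proof.
move=> Ds0 Ds_delta delta_lt ep_Ds ep_sg sg0 sg_Ds th0 th_m.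
have gain : sg * Ds * th <= sg * delta * m.
  by rewrite -!mulrA ler_pM2l // ler_pM //; lra.
have sqr_gap : delta ^+ 2 - Ds ^+ 2 < ep * (3 * Ds).
  have : (delta - Ds) * (delta + Ds) < ep * (3 * Ds).
    apply: le_lt_trans (_ : _ <= ep * (delta + Ds)) _.
      by rewrite ler_pM2r; lra.
    by rewrite ltr_pM2l; lra.
  by rewrite -subr_sqr.
have : ep * (3 * Ds) <= 3 / 8 * (sg * Ds * th) by nra.
have : sg ^+ 2 <= sg * Ds * th / 2 by rewrite expr2 -mulrA -mulrA ler_pM2l // mulrA.
have : 0 < sg * Ds * th by rewrite !mulr_gt0.
lra.
Qed.

(* Used with gm = |grad G x|, hm = |grad G w|, n = |w - x|, delta = |p - w|,
   A = <p - w, w - x>, ih = <grad G w, w - x> and th the distance between the unit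
   vectors of p - w and grad G w. *)
Lemma exterior_ball_real (c l rho D gm hm n delta A ih th : R) :
  0 < c -> 0 < rho -> l * rho < c -> 0 < D -> c <= gm -> c <= hm ->
  0 < delta -> delta <= rho - D / 2 -> rho <= delta + n -> 0 < A + n ^+ 2 ->
  gm * (A + n ^+ 2) <= l * rho * n ^+ 2 ->
  gm * (A + n ^+ 2) - rho * ih <= l * rho * n ^+ 2 ->
  delta * ih <= hm * (A + th * n * delta) ->
  0 <= th -> th < (1 - l * rho / c) * (D / (2 * rho)) ^+ 2 -> False.
Proof.
move=> c0 rho0 l_rho D0 c_gm c_hm delta0 delta_rho rho_n An0 weak mono align th0 th_lt.
have n0 : 0 < n by lra.
have n20 : 0 < n ^+ 2 by rewrite exprn_gt0.
have c_gm' : c * (A + n ^+ 2) <= gm * (A + n ^+ 2) by rewrite ler_pM2r.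
have cA : c * A <= (l * rho - c) * n ^+ 2 by lra.
have A_neg : A < 0.
  have : (l * rho - c) * n ^+ 2 < 0 by rewrite pmulr_llt0 // subr_lt0.
  by move=> neg; rewrite -(pmulr_rlt0 _ c0); lra.
have cA_ih : c * A <= rho * ih.
  have : l * rho * n ^+ 2 <= c * n ^+ 2 by rewrite ler_pM2r // ltW.
  lra.
have th_lt' : th * (4 * c * rho ^+ 2) < (c - l * rho) * D ^+ 2.
  move: th_lt; rewrite -ltr_pdivlMr ?mulr_gt0 ?exprn_gt0 //.
  by congr (_ < _); field; rewrite ?gt_eqF.
have key : th * n * rho ^+ 2 < - A * (D / 2).
  have : (c - l * rho) * D ^+ 2 * n <= (c - l * rho) * D * (2 * n ^+ 2).
    have : 0 <= (c - l * rho) * (D * n * (2 * n - D)) by rewrite !mulr_ge0 //; lra.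
    rewrite !expr2; lra.
  have : 0 < c * rho ^+ 2 * n by rewrite !mulr_gt0 ?exprn_gt0.
  nra.
have gap : rho * (A + th * n * delta) < delta * A.
  have : th * n * rho * delta <= th * n * rho * rho.
    by apply: ler_wpM2l; [rewrite !mulr_ge0 // ltW | lra].
  nra.
have neg : A + th * n * delta < 0 by nra.
have : rho * (delta * ih) <= rho * c * (A + th * n * delta).
  have := ler_wpM2l (ltW rho0) align.
  have : hm * (A + th * n * delta) <= c * (A + th * n * delta) by rewrite ler_nM2r.
  nra.
nra.
Qed.

End RealInequalities.

Section Sublevel.
Variables (R : realType) (X : completeNormedModType R).
Variables (ip : X -> X -> R) (G : X -> R) (gradG : X -> X).
Hypothesis hip : is_hilbert_inner ip.
Hypothesis hgrad : forall x, is_gradient ip G x (gradG x).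

Local Notation Z := [set w | G w <= 1].

Lemma derivative_along w d t :
  derivative_at (fun s => G (w + s *: d)) t (ip (gradG (w + t *: d)) d).
Proof.
rewrite /derivative_at (_ : (fun h => _) =
  fun h => (G (w + t *: d + h *: d) - G (w + t *: d)) / h); first exact: hgrad.
by apply/funext => h; rewrite scalerDl addrA.
Qed.

Lemma exists_level1_closer w p : G w <= 1 -> 1 < G p ->
  exists2 y, G y = 1 & `|p - y| <= `|p - w|.
Proof.
move=> Gw Gp.
have f_cont : {within `[0, 1], continuous (fun s => G (w + s *: (p - w)))}.
  apply: continuous_subspaceT => s.
  exact: derivative_at_continuous (@derivative_along w (p - w) s).
have [|s] := IVT ler01 f_cont (v := 1).
  rewrite /= scale0r addr0 scale1r addrC subrK.
  by rewrite ge_min Gw le_max (ltW Gp) orbT.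
rewrite in_itv /= => /andP[s0 s1] fs1; exists (w + s *: (p - w)) => //.
rewrite opprD addrA -{1}(scale1r (p - w)) -scalerBl normrZ ger0_norm; last lra.
by rewrite ler_piMl //; lra.
Qed.

Variable mu : R -> R.
Hypothesis grad_modulus : forall x y, G x <= 1 -> G y <= 1 ->
  `|gradG x - gradG y| <= mu `|x - y|.

Lemma ip_grad_le w w' d : G w <= 1 -> G w' <= 1 ->
  ip (gradG w') d <= ip (gradG w) d + mu `|w' - w| * `|d|.
Proof.
move=> Gw Gw'; have := ler_wpM2r (normr_ge0 d) (grad_modulus Gw' Gw).
have := cauchy_schwarz hip (gradG w' - gradG w) d.
by have := ler_norm (ip (gradG w' - gradG w) d); rewrite (ipBl hip); lra.
Qed.

Lemma descent_stays w u eta : G w <= 1 ->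
  (forall s, 0 <= s -> s <= `|u| -> mu s < eta) ->
  ip (gradG w) u <= - (eta * `|u|) -> G (w + u) <= 1.
Proof.
move=> Gw mu_lt ip_u; have [->|u0] := eqVneq u 0; first by rewrite addr0.
have u_gt0 : 0 < `|u| by rewrite normr_gt0.
rewrite -[u]scale1r.
apply: (le_forward_invariant (a := 0) (b := 1) (@derivative_along w u)) => //.
- move=> t /andP[t0 t1] Gt.
  have := ip_grad_le u Gw Gt; rewrite (addrC w) addrK normrZ ger0_norm //.
  have tu : t * `|u| <= `|u| by rewrite ler_piMl // ltW.
  have : mu (t * `|u|) * `|u| < eta * `|u| by rewrite ltr_pM2r // mu_lt ?mulr_ge0.
  lra.
- by rewrite scale0r addr0.
- by rewrite ler01 lexx.
Qed.

Hypothesis mu_cont : {within `[0, +oo[, continuous mu}.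
Hypothesis mu0 : mu 0 = 0.

Lemma sublevel_interior x : G x < 1 ->
  exists2 e, 0 < e & forall y, `|y - x| < e -> G y < 1.
Proof.
move=> Gx; have [e0 e00 mu_lt1] := continuous_at0_lt mu_cont mu0 ltr01.
set g := gradG x; have K0 : 0 < `|g| + 2 by rewrite ltr_wpDl.
exists (Num.min e0 ((1 - G x) / (2 * (`|g| + 2)))) => [|y].
  by rewrite lt_min e00 divr_gt0 ?mulr_gt0 //; lra.
rewrite lt_min => /andP[ye0 ye1]; have [->//|yx] := eqVneq y x.
set v := y - x; have v0 : 0 < `|v| by rewrite normr_gt0 subr_eq0.
set K := (`|g| + 2) * `|v|.
have KG : K < (1 - G x) / 2.
  by move: ye1; rewrite ltr_pdivlMr ?mulr_gt0 // /K; nra.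
(* The slack t K keeps the segment inside Z, where (ii) controls the gradient. *)
have inv : forall t, 0 <= t <= 1 -> G (x + t *: v) - t * K <= G x.
  apply: le_forward_invariant => [t|t /andP[t0 t1] Gt|].
  - exact: derivative_atB_linear (@derivative_along x v t).
  - have Gxt : G (x + t *: v) <= 1 by nra.
    have := ip_grad_le v (ltW Gx) Gxt; rewrite (addrC x) addrK normrZ ger0_norm //.
    have tv : t * `|v| <= e0 by rewrite (le_trans _ (ltW ye0)) // ler_piMl // ltW.
    have : mu (t * `|v|) < 1 by rewrite mu_lt1 ?mulr_ge0 // ltW.
    have := ler_norm (ip g v); have := cauchy_schwarz hip g v; rewrite -/g /K; nra.
  - by rewrite scale0r addr0 mul0r subr0.
have := inv 1; rewrite ler01 lexx scale1r mul1r /v (addrC x) subrK => /(_ isT); lra.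
Qed.

Lemma boundary_ge1 x : boundary Z x -> 1 <= G x.
Proof.
move=> bx; rewrite leNgt; apply/negP => /sublevel_interior[e e0 near_lt1].
have [y Zy ye] := boundary_near_notin bx e0.
by apply: Zy; rewrite /= ltW ?near_lt1.
Qed.

Variable c : R.
Hypothesis hc : 0 < c.
Hypothesis grad_lb : forall x, G x = 1 -> c <= `|gradG x|.

Lemma sublevel_closed y0 :
  (forall e, 0 < e -> exists2 y, G y <= 1 & `|y - y0| < e) -> G y0 <= 1.
Proof.
move=> y0_cl; rewrite leNgt; apply/negP => Gy0.
have c4 : 0 < c / 4 by rewrite divr_gt0.
have [e0 e00 mu_lt] := continuous_at0_lt mu_cont mu0 c4.
have e02 : 0 < e0 / 2 by rewrite divr_gt0.
have [z0 Gz0 z0y0] := y0_cl _ e02.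
have [y Gy yy0] := exists_level1_closer Gz0 Gy0.
have cy := grad_lb Gy.
have Gy1 : G y <= 1 by rewrite Gy.
have n1 : `|normalize (gradG y)| = 1 by rewrite norm_normalize // -normr_gt0; lra.
set n := normalize (gradG y) in n1 *.
(* Points of the ray y0 - s n are reached by descent steps from points of Z near y0,
   while G stays above 1 on this ray near y0. *)
have descend s : 0 < s -> s <= 3 / 4 * e0 -> G (y0 - s *: n) <= 1.
  move=> s0 se; have [|y' Gy'] := y0_cl (Num.min (e0 / 2) (s / 3)).
    by rewrite lt_min e02 divr_gt0.
  rewrite lt_min => /andP[y'e y's].
  have -> : y0 - s *: n = y' + (y0 - y' - s *: n) by rewrite addrA (addrC y') subrK.
  apply: (descent_stays (w := y') (eta := c / 4)) => //.
  - move=> t t0 tv; apply: mu_lt => //.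
    have := ler_normB (y0 - y') (s *: n).
    by rewrite normrZ n1 mulr1 gtr0_norm // (distrC y0 y'); lra.
  - apply: ip_descent_perturbed => //; last by rewrite (distrC y0 y'); lra.
    apply: le_trans (grad_modulus Gy' Gy1) (ltW (mu_lt _ _ _)) => //.
    have := ler_normD (y' - y0) (y0 - y); rewrite addrA subrK.
    by rewrite (distrC y0 z0) in yy0; lra.
have [d d0 Hd] : exists2 d, 0 < d & forall s, `|s| < d -> 1 < G (y0 + s *: - n).
  have cont := derivative_at_continuous (@derivative_along y0 (- n) 0).
  have /nbhs_ballP[d /= d0 Hd] := @cvgr_gt _ _ _ (nbhs_filter 0) _ _ cont 1
    ltac:(by rewrite /= scale0r addr0).
  by exists d => // s sd; apply: Hd; rewrite /ball /= sub0r normrN.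
have [m0 md me] := min_gt0 d0 (ltac:(by rewrite mulr_gt0) : 0 < 3 / 4 * e0).
set m := Num.min _ _ in m0 md me.
have := Hd (m / 2); rewrite gtr0_norm ?divr_gt0 // scalerN.
by have := descend (m / 2) ltac:(lra) ltac:(lra); lra.
Qed.

Lemma boundary_eq1 x : boundary Z x -> G x = 1.
Proof.
move=> bx; apply/eqP; rewrite eq_le boundary_ge1 // andbT.
exact/sublevel_closed/boundary_near_in.
Qed.

Variable lambda : R.
Hypothesis hl : 0 < lambda.
Hypothesis grad_monotone : forall x z, boundary Z x -> G z <= 1 ->
  ip (gradG x - gradG z) (x - z) >= - lambda * `|x - z| ^+ 2.

Lemma boundary_ip_grad_le x z : boundary Z x -> G z <= 1 ->
  ip (gradG x) (z - x) <= lambda * `|z - x| ^+ 2.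
Proof.
move=> bx Gz; rewrite leNgt; apply/negP => ip_gt.
set g := gradG x in ip_gt; set N := `|z - x| ^+ 2 in ip_gt.
have ip_xz : ip g (x - z) = - ip g (z - x) by rewrite -(ipNr hip) opprB.
have N_xz : `|x - z| ^+ 2 = N by rewrite distrC.
have segment t : 0 <= t <= 1 -> G (z + t *: (x - z)) <= 1.
  apply: (le_forward_invariant (@derivative_along z (x - z))) => [{}t /andP[t0 t1] Gt|];
    last by rewrite scale0r addr0.
  have := grad_monotone bx Gt.
  have -> : x - (z + t *: (x - z)) = (1 - t) *: (x - z).
    by rewrite scalerBl scale1r opprD addrA.
  have t1' : 0 <= 1 - t by lra.
  rewrite (ipZr hip) (ipBl hip) normrZ exprMn N_xz ger0_norm // ip_xz.
  set q := ip _ (x - z); move=> mono.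
  have {}mono : - (lambda * (1 - t) * N) <= - ip g (z - x) - q.
    have E : (1 - t) * - (lambda * (1 - t) * N) = - lambda * ((1 - t) ^+ 2 * N) by ring.
    by rewrite -(ler_pM2l (_ : 0 < 1 - t)) ?E //; lra.
  have : 0 <= lambda * t * N by rewrite !mulr_ge0 ?sqr_ge0 // ltW.
  lra.
have [e e0 De] := derivative_at_gt0 (@derivative_along x (z - x) 0) ltac:(
  by rewrite scale0r addr0; apply: le_lt_trans ip_gt; rewrite mulr_ge0 ?sqr_ge0 ?ltW).
have [h0 he h1] := min_gt0 e0 ltr01; set h := Num.min e 1 in h0 he h1.
have := De (h / 2) ltac:(lra) ltac:(lra).
rewrite scale0r addr0 add0r (_ : x + _ = z + (1 - h / 2) *: (x - z)); last first.
  by rewrite scalerBl scale1r addrA (addrC z) subrK -scalerN opprB.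
by have := segment (1 - h / 2) ltac:(lra); have := boundary_ge1 bx; lra.
Qed.

Lemma center_outside x rho : boundary Z x -> 0 < rho -> lambda * rho < c ->
  1 < G (x + (rho / `|gradG x|) *: gradG x).
Proof.
move=> bx rho0 l_rho; rewrite ltNge; apply/negP => Gp.
have gx := grad_lb (boundary_eq1 bx).
have g0 : 0 < `|gradG x| := lt_le_trans hc gx.
have rg0 : 0 <= rho / `|gradG x| by rewrite divr_ge0 // ltW.
have E : rho / `|gradG x| * `|gradG x| = rho by rewrite divfK ?gt_eqF.
have := boundary_ip_grad_le bx Gp.
rewrite (addrC x) addrK (ipZr hip) (ipxx hip) normrZ ger0_norm // E expr2 mulrA E.
nra.
Qed.

Definition sublevel_dist p := inf [set `|w - p| | w in Z].

Lemma sublevel_dist_le p w : G w <= 1 -> sublevel_dist p <= `|w - p|.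
Proof. by move=> Gw; apply: ge_inf; [exists 0 => _ [y _ <-] | exists w]. Qed.

Lemma sublevel_dist_approx z p e : G z <= 1 -> 0 < e ->
  exists2 w, G w <= 1 & `|w - p| < sublevel_dist p + e.
Proof.
move=> Gz e0; have hinf : has_inf [set `|w - p| | w in Z].
  by split; [exists `|z - p|, z | exists 0 => _ [y _ <-]].
by have [_ [w Gw <-] wp] := inf_adherent e0 hinf; exists w.
Qed.

Lemma sublevel_dist_gt0 z p : G z <= 1 -> 1 < G p -> 0 < sublevel_dist p.
Proof.
move=> Gz Gp; rewrite ltNge; apply/negP => dist0.
suff : G p <= 1 by lra.
apply: sublevel_closed => e e0; have [w Gw wp] := sublevel_dist_approx p Gz e0.
by exists w => //; lra.
Qed.

Lemma almost_nearest_normal p Ds th : 0 < Ds -> 0 < th ->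
  (forall y, G y <= 1 -> Ds <= `|y - p|) ->
  exists2 ep, 0 < ep & forall w, G w = 1 -> `|p - w| < Ds + ep ->
    `|normalize (p - w) - normalize (gradG w)| < th.
Proof.
move=> Ds0 th0 Ds_le.
have eta0 : 0 < c * th / 2 by rewrite divr_gt0 ?mulr_gt0.
have [s0 s00 mu_lt] := continuous_at0_lt mu_cont mu0 eta0.
have Dth : 0 < Ds * th / 2 by rewrite divr_gt0 ?mulr_gt0.
have [sg0 sg_s0 sg_Ds] := min_gt0 s00 Dth; set sg := Num.min _ _ in sg0 sg_s0 sg_Ds.
have sgth : 0 < sg * th / 8 by rewrite divr_gt0 ?mulr_gt0.
have [ep0 ep_Ds ep_sg] := min_gt0 Ds0 sgth; set ep := Num.min _ _ in ep0 ep_Ds ep_sg.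
exists ep => // w Gw wp; rewrite ltNge; apply/negP => th_le.
have Ds_e : Ds <= `|p - w| by rewrite distrC Ds_le ?Gw.
have e0 : p - w != 0 by rewrite -normr_gt0; lra.
have h_c := grad_lb Gw.
have h0 : gradG w != 0 by rewrite -normr_gt0 (lt_le_trans hc h_c).
set dd := normalize (p - w) - normalize (gradG w) in th_le *.
have dd0 : 0 < `|dd| by lra.
(* Were the unit vectors th apart, the step u from w along their difference would stay
   in Z and get closer to p than Ds. *)
pose u := (sg / `|dd|) *: dd.
have nu : `|u| = sg.
  by rewrite normrZ ger0_norm ?divfK ?gt_eqF // divr_ge0 // ltW.
have ip_hu : ip (gradG w) u = - (sg * `|gradG w| * `|dd| / 2).
  have : ip (gradG w) dd = - (`|gradG w| * `|dd| ^+ 2 / 2).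
    have := ip_normalizeB hip h0 e0; rewrite distrC -/dd => <-.
    by rewrite -(ipNr hip) opprB.
  by rewrite (ipZr hip) => ->; field; rewrite gt_eqF.
have ip_ue : ip u (p - w) = sg * `|p - w| * `|dd| / 2.
  have : ip dd (p - w) = `|p - w| * `|dd| ^+ 2 / 2.
    by rewrite (ipC hip) (ip_normalizeB hip).
  by rewrite (ipZl hip) => ->; field; rewrite gt_eqF.
have Gwu : G (w + u) <= 1.
  apply: (descent_stays (eta := c * th / 2)); first by rewrite Gw.
    by move=> t t0; rewrite nu => t_sg; apply: mu_lt => //; lra.
  rewrite ip_hu nu; have : c * th <= `|gradG w| * `|dd| by rewrite ler_pM // ltW.
  nra.
have wu_p : `|w + u - p| ^+ 2 = sg ^+ 2 - sg * `|p - w| * `|dd| + `|p - w| ^+ 2.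
  rewrite (_ : w + u - p = u - (p - w)); last by rewrite opprB addrAC addrC.
  by rewrite (normB2 hip) nu ip_ue; field.
have := shortcut_sqr_lt Ds0 Ds_e wp ep_Ds ep_sg sg0 sg_Ds th0 th_le.
rewrite -wu_p; have := Ds_le _ Gwu; rewrite !expr2; nra.
Qed.

Lemma normal_gap x w p rho D : boundary Z x -> G w = 1 ->
  0 < rho -> lambda * rho < c -> 0 < D ->
  p = x + (rho / `|gradG x|) *: gradG x -> 0 < `|p - w| -> `|p - w| <= rho - D / 2 ->
  (1 - lambda * rho / c) * (D / (2 * rho)) ^+ 2 <=
    `|normalize (p - w) - normalize (gradG w)|.
Proof.
move=> bx Gw rho0 l_rho D0 p_def e_gt0 e_le; rewrite leNgt; apply/negP => th_lt.
have Gw1 : G w <= 1 by rewrite Gw.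
have g_c := grad_lb (boundary_eq1 bx); have h_c := grad_lb Gw.
have g0 : 0 < `|gradG x| := lt_le_trans hc g_c.
have h0 : gradG w != 0 by rewrite -normr_gt0 (lt_le_trans hc h_c).
have e0 : p - w != 0 by rewrite -normr_gt0.
set dd := normalize (p - w) - normalize (gradG w) in th_lt.
have eu : (p - w) + (w - x) = (rho / `|gradG x|) *: gradG x.
  by rewrite addrA subrK p_def (addrC x) addrK.
have n_eu : `|(p - w) + (w - x)| = rho.
  by rewrite eu normrZ ger0_norm ?divfK ?gt_eqF // divr_ge0 // ltW.
have ip_gu : rho * ip (gradG x) (w - x) =
    `|gradG x| * (ip (p - w) (w - x) + `|w - x| ^+ 2).
  have g_eu : gradG x = (`|gradG x| / rho) *: ((p - w) + (w - x)).
    by rewrite eu scalerA mulrA divfK ?gt_eqF // divff ?gt_eqF // scale1r.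
  by rewrite {1}g_eu (ipZl hip) (ipDl hip) (ipxx hip); field; rewrite gt_eqF.
have weak := boundary_ip_grad_le bx Gw1.
have mono := grad_monotone bx Gw1.
rewrite -opprB (ipNr hip) (ipBl hip) normrN in mono.
have An0 : 0 < ip (p - w) (w - x) + `|w - x| ^+ 2.
  have := normD2 hip (p - w) (w - x); rewrite n_eu.
  have : `|p - w| ^+ 2 < rho ^+ 2 by rewrite ltrXn2r ?nnegrE ?ltW //; lra.
  by have := sqr_ge0 `|w - x|; lra.
have tri : rho <= `|p - w| + `|w - x| by rewrite -n_eu ler_normD.
have align : `|p - w| * ip (gradG w) (w - x) <=
    `|gradG w| * (ip (p - w) (w - x) + `|dd| * `|w - x| * `|p - w|).
  have split : ip (normalize (gradG w)) (w - x) =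
      ip (normalize (p - w)) (w - x) - ip dd (w - x).
    by rewrite /dd (ipBl hip); ring.
  have ip_e : `|p - w| * ip (normalize (p - w)) (w - x) = ip (p - w) (w - x).
    by rewrite -(ipZl hip) normalizeK.
  have := cauchy_schwarz hip dd (w - x); rewrite ler_norml => /andP[cs _].
  rewrite -{1}(normalizeK h0) (ipZl hip) split mulrCA mulrBr ip_e.
  rewrite ler_pM2l ?normr_gt0 //; nra.
apply: (exterior_ball_real hc rho0 l_rho D0 g_c h_c e_gt0 e_le tri An0 _ _ align _ th_lt).
- by rewrite -ip_gu; nra.
- by rewrite -ip_gu; nra.
- exact: normr_ge0.
Qed.

Lemma exterior_ball x z rho : boundary Z x -> G z <= 1 ->
  0 < rho -> lambda * rho < c ->
  rho <= `|z - (x + (rho / `|gradG x|) *: gradG x)|.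
Proof.
move=> bx Gz rho0 l_rho; set p := x + _; rewrite leNgt; apply/negP => zp.
have Gp : 1 < G p := center_outside bx rho0 l_rho.
have Ds0 := sublevel_dist_gt0 Gz Gp.
have Ds_rho := le_lt_trans (sublevel_dist_le p Gz) zp.
set Ds := sublevel_dist p in Ds0 Ds_rho.
have D0 : 0 < rho - Ds by lra.
have th0 : 0 < (1 - lambda * rho / c) * ((rho - Ds) / (2 * rho)) ^+ 2.
  rewrite mulr_gt0 ?exprn_gt0 ?divr_gt0 ?mulr_gt0 // subr_gt0.
  by rewrite ltr_pdivrMr // mul1r.
have [ep ep0 align] := almost_nearest_normal Ds0 th0 (@sublevel_dist_le p).
have [eps0 eps_ep eps_D] := min_gt0 ep0 (ltac:(lra) : 0 < (rho - Ds) / 2).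
have [w0 Gw0 w0p] := sublevel_dist_approx p Gz eps0.
have [w Gw ww0] := exists_level1_closer Gw0 Gp.
have Ds_w : Ds <= `|p - w| by rewrite distrC sublevel_dist_le ?Gw.
have wp : `|p - w| < Ds + Num.min ep ((rho - Ds) / 2).
  by apply: le_lt_trans ww0 _; rewrite distrC.
have := align w Gw ltac:(lra).
have := normal_gap bx Gw rho0 l_rho D0 erefl ltac:(lra) ltac:(lra).
lra.
Qed.

Lemma boundary_exterior_sphere x z : boundary Z x -> G z <= 1 ->
  (c / lambda) * (2 * ip (gradG x) (z - x)) <= `|gradG x| * `|z - x| ^+ 2.
Proof.
move=> bx Gz; have g0 : 0 < `|gradG x| := lt_le_trans hc (grad_lb (boundary_eq1 bx)).
apply: le_mul_of_forall_lt; rewrite ?divr_gt0 ?mulr_ge0 ?sqr_ge0 // => rho rho0.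
rewrite ltr_pdivlMr // mulrC => l_rho.
have rg : 0 <= rho / `|gradG x| by rewrite divr_ge0 // ltW.
have ext := exterior_ball bx Gz rho0 l_rho.
have := ler_pM (ltW rho0) (ltW rho0) ext ext.
rewrite -!expr2 opprD addrA (normB2 hip) (ipZr hip) normrZ ger0_norm //.
rewrite divfK ?gt_eqF // (ipC hip) => ineq.
have E : `|gradG x| * (2 * (rho / `|gradG x| * ip (gradG x) (z - x))) =
    rho * (2 * ip (gradG x) (z - x)) by field; rewrite gt_eqF.
by rewrite -E ler_pM2l //; lra.
Qed.

End Sublevel.

Theorem lemma1p5 (R : realType) (X : completeNormedModType R)
  (ip : X -> X -> R) (G : X -> R) (gradG : X -> X)
  (lambda c : R) (mu : R -> R) :
  is_hilbert_inner ip ->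
  (forall x, 0 <= G x) ->
  (forall x, is_gradient ip G x (gradG x)) ->
  0 < lambda -> 0 < c ->
  {within `[0, +oo[, continuous mu} ->
  {in `[0, +oo[ &, {homo mu : s t / s <= t}} ->
  (forall s, 0 <= s -> 0 <= mu s) ->
  mu 0 = 0 ->
  mu x @[x --> +oo] --> +oo ->
  (forall x, G x = 1 -> c <= `|gradG x|) ->
  (forall x y, G x <= 1 -> G y <= 1 ->
     `|gradG x - gradG y| <= mu `|x - y|) ->
  (forall x z, boundary [set w | G w <= 1] x -> G z <= 1 ->
     ip (gradG x - gradG z) (x - z) >= - lambda * `|x - z| ^+ 2) ->
  let r := c / lambda in
  forall x z, boundary [set w | G w <= 1] x -> G z <= 1 ->
    0 <= ip (gradG x) (x - z) + `|gradG x| / (2 * r) * `|x - z| ^+ 2.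
Proof.
move=> hip _ hgrad hl hc mu_cont _ _ mu0 _ grad_lb grad_modulus grad_monotone r x z bx Gz.
have ext := boundary_exterior_sphere hip hgrad grad_modulus mu_cont mu0 hc grad_lb hl
  grad_monotone bx Gz.
have r0 : 0 < 2 * r by rewrite mulr_gt0 ?divr_gt0.
rewrite -[x - z]opprB (ipNr hip) normrN [X in 0 <= X]addrC subr_ge0.
by rewrite mulrAC ler_pdivlMr // /r; lra.
Qed.
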